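(* Let $k\ge 1$ and $n$ be integers with $kn$ even, and let $H^*\in\mathcal H$ be any $k$-factor on $[n]$. Then for every integer $0\le t\le kn/2$, $$\left|\{H\in\mathcal H:\ |H\triangle H^*|=2t\}\right|\;\le\;\binom{kn/2}{t}\frac{(2t)!}{2^t\,t!}\;\le\;\binom{kn/2}{t}2^t\,t!\;\le\;(kn)^t\,e^{-t(t-1)/(kn)}.$$
   Context: A $k$-factor on $[n]$ is a $k$-regular simple graph with vertex set $[n]$, identified with its edge set; $\mathcal H$ denotes the set of all $k$-factors on $[n]$. $\triangle$ denotes symmetric difference of edge sets. *)

From HB Require Import structures.
From mathcomp Require Import all_boot all_order all_algebra.
From mathcomp Require Import all_classical all_reals all_analysis.
Set Implicit Arguments. Unset Strict Implicit. Unset Printing Implicit Defensive.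

(* A simple graph on [n] = 'I_n is identified with its edge set: a set of
   2-element subsets of 'I_n.  A k-factor is a k-regular simple graph. *)
Definition kfactor (n k : nat) (H : {set {set 'I_n}}) : bool :=
  [forall e in H, #|e| == 2] && [forall v : 'I_n, #|[set e in H | v \in e]| == k].

Definition symdiff (T : finType) (A B : {set T}) : {set T} := (A :\: B) :|: (B :\: A).

From HB Require Import structures.
From mathcomp Require Import all_boot all_order all_algebra.
From mathcomp Require Import all_classical all_reals all_analysis.
From mathcomp Require Import zify ring.
Import Order.TTheory GRing.Theory Num.Theory.

Set Implicit Arguments.
Unset Strict Implicit.
Unset Printing Implicit Defensive.

(* If H is a k-factor whose symmetric difference with H* has 2t edges, then H and
   H* have the same degrees, hence the same number m = kn/2 of edges; so H is
   obtained from H* by dropping a t-subset S of its edges and adding a graph of t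
   edges whose degree at every vertex is that of S.  A graph with t edges and
   prescribed degrees d is determined by the partner w of a fixed vertex v with
   d v > 0 (at most 2t - 1 choices, as sum d = 2t bounds the support of d)
   together with the remaining graph of t - 1 edges, so there are at most
   (2t - 1)!! = (2t)! / (2^t t!) <= 2^t t! of them.  Finally
   C(m, t) 2^t t! is the product of the 2m - 2i = 2m (1 - 2i/2m) for i < t, and
   1 - x <= exp(-x). *)

Lemma leq_card_bigcup (I T : finType) (P : {set I}) (F : I -> {set T}) b :
  (forall i, i \in P -> #|F i| <= b) -> #|\bigcup_(i in P) F i| <= #|P| * b.
Proof.
move=> Fb; apply: (@leq_trans (\sum_(i in P) #|F i|)).
  elim/big_rec2: _ => [|i X s _ Xs]; first by rewrite cards0.
  exact: leq_trans (leq_card_setU _ _) (leq_add _ Xs).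
by rewrite -sum_nat_const; apply: leq_sum.
Qed.

Section DegreeConstrainedGraphs.
Variable T : finType.
Implicit Types (A B : {set {set T}}) (e : {set T}) (u v w : T) (d : T -> nat).

Definition two_uniform A := [forall e in A, #|e| == 2].

Definition deg A u := #|[set e in A | u \in e]|.

Lemma deg_sum A : two_uniform A -> \sum_u deg A u = 2 * #|A|.
Proof.
move=> /forall_inP A2.
have degE u : deg A u = \sum_(e in A) (u \in e).
  rewrite /deg -sum1_card big_mkcond [RHS]big_mkcond; apply: eq_bigr => e _.
  by rewrite !inE; case: (e \in A); case: (u \in e).
rewrite (eq_bigr _ (fun u _ => degE u)) exchange_big mulnC -sum_nat_const.
apply: eq_bigr => e /A2/eqP <-.
by rewrite -sum1_card [RHS]big_mkcond; apply: eq_bigr => u _; case: (u \in e).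
Qed.

Lemma deg_setD1 A e u : e \in A -> deg (A :\ e) u = deg A u - (u \in e).
Proof.
move=> eA; rewrite /deg.
have -> : [set x in A :\ e | u \in x] = [set x in A | u \in x] :\ e.
  by apply/setP => x; rewrite !inE andbA.
by rewrite (cardsD1 e [set x in A | u \in x]) inE eA addKn.
Qed.

Lemma deg_setID A B u : deg (A :&: B) u + deg (A :\: B) u = deg A u.
Proof.
rewrite /deg -(cardsID B [set e in A | u \in e]).
by congr (_ + _); apply: eq_card => e; rewrite !inE -!andbA // (andbC (e \in B)).
Qed.

Lemma deg_setD_sym A B u : deg A u = deg B u -> deg (A :\: B) u = deg (B :\: A) u.
Proof. by rewrite -(deg_setID A B) -(deg_setID B A) finset.setIC => /addnI. Qed.

Definition graphs_deg t d :=
  [set A | [&& two_uniform A, #|A| == t & [forall u, deg A u == d u]]].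

Lemma graphs_deg_setD1 t d A e : A \in graphs_deg t.+1 d -> e \in A ->
  A :\ e \in graphs_deg t (fun u => d u - (u \in e)).
Proof.
rewrite !inE => /and3P[/forall_inP A2 /eqP cA /forallP dA] eA; apply/and3P; split.
- by apply/forall_inP => x /setD1P[_ /A2].
- by move: cA; rewrite (cardsD1 e) eA add1n => -[->].
- by apply/forallP => u; rewrite deg_setD1 // (eqP (dA u)).
Qed.

Lemma graphs_deg_edge t d A v : A \in graphs_deg t d -> 0 < d v ->
  exists2 w, 0 < d w /\ v != w & [set v; w] \in A.
Proof.
rewrite inE => /and3P[/forall_inP A2 _ /forallP dA] dv.
have [e] : exists e, e \in [set e in A | v \in e].
  by apply/card_gt0P; rewrite -/(deg A v) (eqP (dA v)).
rewrite inE => /andP[eA ve].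
have [w [vw e_vw]] : exists w, v != w /\ e = [set v; w].
  have /cards2P [x [y [xy exy]]] := A2 _ eA.
  move: ve; rewrite exy !inE => /orP[]/eqP ->; first by exists y.
  by exists x; rewrite eq_sym finset.setUC.
rewrite {}e_vw in eA; exists w => //; split => //.
rewrite -(eqP (dA w)); apply/card_gt0P.
by exists [set v; w]; rewrite !inE eA eqxx orbT.
Qed.

(* oddfact t = 1 * 3 * ... * (2t - 1), the number of perfect matchings on 2t points *)
Fixpoint oddfact t := if t is t'.+1 then (2 * t' + 1) * oddfact t' else 1.

Lemma card_support_le d : #|[set u | 0 < d u]| <= \sum_u d u.
Proof.
by rewrite -sum1_card big_mkcond; apply: leq_sum => u _; rewrite inE; case: (d u).
Qed.

Lemma card_graphs_deg_le t d : #|graphs_deg t d| <= oddfact t.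
Proof.
elim: t d => [|t IH] d.
  rewrite /= -(cards1 (finset.set0 : {set {set T}})).
  apply/subset_leq_card/fintype.subsetP => A.
  by rewrite !inE => /and3P[_ /eqP/cards0_eq -> _].
have [->|[A0 A0G]] := set_0Vmem (graphs_deg t.+1 d); first by rewrite cards0.
have sum_d : \sum_u d u = 2 * t.+1.
  move: A0G; rewrite inE => /and3P[A02 /eqP <- /forallP dA0].
  by rewrite -deg_sum //; apply: eq_bigr => u _; rewrite (eqP (dA0 u)).
have [v dv] : exists v, 0 < d v.
  have [/existsP //|] := boolP [exists v, 0 < d v]; rewrite negb_exists => /forallP d0.
  suff : \sum_u d u = 0 by rewrite sum_d.
  by apply: big1 => u _; apply/eqP; rewrite -leqn0 leqNgt (d0 u).
pose W := [set w | 0 < d w] :\ v.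
have cW : #|W| <= 2 * t + 1.
  have := card_support_le d; rewrite sum_d (cardsD1 v) inE dv /W; lia.
have cover : graphs_deg t.+1 d \subset
    \bigcup_(w in W) finset.setU [set [set v; w]]
                        @: graphs_deg t (fun u => d u - (u \in [set v; w])).
  apply/fintype.subsetP => A AG; have [w [dw vw] eA] := graphs_deg_edge AG dv.
  apply/bigcupP; exists w; first by rewrite !inE eq_sym vw.
  apply/imsetP; exists (A :\ [set v; w]); first exact: graphs_deg_setD1.
  by rewrite finset.setD1K.
apply: leq_trans (subset_leq_card cover) _.
apply: leq_trans (leq_card_bigcup (b := oddfact t) _) (leq_mul cW (leqnn _)).
by move=> w _; apply: leq_trans (leq_imset_card _ _) (IH _).
Qed.

Lemma card_symdiff A B : #|symdiff A B| = #|A :\: B| + #|B :\: A|.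
Proof.
rewrite /symdiff cardsU; have -> : (A :\: B) :&: (B :\: A) = finset.set0.
  by apply/setP => e; rewrite !inE; case: (e \in A); case: (e \in B).
by rewrite cards0 subn0.
Qed.

Lemma card_setD_sym A B : #|A| = #|B| -> #|A :\: B| = #|B :\: A|.
Proof. by rewrite -(cardsID B A) -(cardsID A B) finset.setIC => /addnI. Qed.

Lemma card_eq_deg A B : two_uniform A -> two_uniform B ->
  (forall u, deg A u = deg B u) -> #|A| = #|B|.
Proof.
move=> A2 B2 dAB; apply/eqP; rewrite -(eqn_pmul2l (isT : 0 < 2)) -!deg_sum //.
by rewrite (eq_bigr _ (fun u _ => dAB u)).
Qed.

Lemma card_same_deg_symdiff_le Hs t : two_uniform Hs ->
  #|[set H | [&& two_uniform H, [forall u, deg H u == deg Hs u]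
               & #|symdiff H Hs| == 2 * t]]| <= 'C(#|Hs|, t) * oddfact t.
Proof.
move=> Hs2.
have cover : [set H | [&& two_uniform H, [forall u, deg H u == deg Hs u]
                        & #|symdiff H Hs| == 2 * t]] \subset
    \bigcup_(S in [set S : {set {set T}} | S \subset Hs & #|S| == t])
       finset.setU (Hs :\: S) @: graphs_deg t (deg S).
  apply/fintype.subsetP => H; rewrite inE => /and3P[H2 /forallP dH /eqP cH].
  have dHE u : deg H u = deg Hs u by exact/eqP.
  have [cHD cDH] : #|H :\: Hs| = t /\ #|Hs :\: H| = t.
    have := card_setD_sym (card_eq_deg H2 Hs2 dHE); move: cH; rewrite card_symdiff; lia.
  apply/bigcupP; exists (Hs :\: H); first by rewrite inE subsetDl cDH eqxx.
  apply/imsetP; exists (H :\: Hs).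
    rewrite inE cHD eqxx /=; apply/andP; split.
      by apply/forall_inP => e /setDP[/(forall_inP H2)].
    by apply/forallP => u; rewrite (deg_setD_sym (dHE u)).
  by apply/setP => e; rewrite !inE; case: (e \in H); case: (e \in Hs).
apply: leq_trans (subset_leq_card cover) _; rewrite -cards_draws.
apply: leq_card_bigcup => S _.
exact: leq_trans (leq_imset_card _ _) (card_graphs_deg_le _ _).
Qed.

End DegreeConstrainedGraphs.

Lemma card_kfactor n k (H : {set {set 'I_n}}) : kfactor k H -> 2 * #|H| = k * n.
Proof.
case/andP => H2 /forallP dH; rewrite -(deg_sum H2) (eq_bigr (fun _ => k)).
  by rewrite sum_nat_const card_ord mulnC.
by move=> v _; apply/eqP/dH.
Qed.

Lemma card_kfactors_symdiff_le n k (Hs : {set {set 'I_n}}) t : kfactor k Hs ->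
  #|[set H | kfactor k H & #|symdiff H Hs| == 2 * t]| <= 'C(#|Hs|, t) * oddfact t.
Proof.
move=> /andP[Hs2 /forallP dHs]; apply: leq_trans (card_same_deg_symdiff_le t Hs2).
apply/subset_leq_card/fintype.subsetP => H.
rewrite !inE => /andP[/andP[H2 /forallP dH] ->].
by apply/and3P; split => //; apply/forallP => u; rewrite /deg (eqP (dH u)) (eqP (dHs u)).
Qed.

Lemma oddfact_fact t : (2 * t)`! = oddfact t * (2 ^ t * t`!).
Proof.
elim: t => [|t IH] //; have -> : 2 * t.+1 = (2 * t).+2 by lia.
by rewrite !factS IH /= expnS; nia.
Qed.

Lemma oddfact_le t : oddfact t <= 2 ^ t * t`!.
Proof. by elim: t => [|t IH] //=; rewrite factS expnS; nia. Qed.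

Local Open Scope ring_scope.

Lemma expn2_ffact_le_expR (R : realType) m t : (t <= m)%N ->
  ((2 ^ t * m ^_ t)%N%:R : R)
    <= (2 * m)%N%:R ^+ t * expR (- ((t * (t - 1))%N%:R / (2 * m)%N%:R)).
Proof.
elim: t => [|t IH] tm; first by rewrite ffactn0 mul0n mul0r oppr0 expR0 mulr1.
have M0 : 0 < ((2 * m)%N%:R : R) by rewrite ltr0n; lia.
set M := ((2 * m)%N%:R : R) in M0 IH *.
have -> : (2 ^ t.+1 * m ^_ t.+1 = 2 ^ t * m ^_ t * (2 * m - 2 * t))%N.
  by rewrite ffactnSr expnS -mulnBr; nia.
have -> : (t.+1 * (t.+1 - 1) = t * (t - 1) + 2 * t)%N.
  by case: t {IH tm} => [|t] //; rewrite !subn1 /=; nia.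
rewrite natrM natrD mulrDl opprD expRD exprS.
apply: le_trans (ler_wpM2r (ler0n _ _) (IH (ltnW tm))) _.
set E := expR _; set F := expR _.
rewrite (_ : M * M ^+ t * (E * F) = M ^+ t * E * (M * F)); last by ring.
apply: ler_wpM2l; first by rewrite mulr_ge0 ?exprn_ge0 ?expR_ge0 // ltW.
apply: le_trans (ler_wpM2l (ltW M0) (expR_ge1Dx _)).
rewrite mulrDr mulr1 mulrN mulrCA mulfV ?gt_eqF // mulr1 natrB //; lia.
Qed.

Theorem mainTheorem1 (R : realType) (k n : nat) (Hstar : {set {set 'I_n}}) (t : nat) :
  (1 <= k)%N -> ~~ odd (k * n) -> kfactor k Hstar -> (t <= (k * n) %/ 2)%N ->
  let N := #|[set H : {set {set 'I_n}} | kfactor k H & #|symdiff H Hstar| == (2 * t)%N]| in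
  let m := ((k * n) %/ 2)%N in
  [/\ (N%:R : R) <= ('C(m, t)%:R : R) * (((2 * t)`!)%:R / (2 ^ t * t`!)%:R),
      ('C(m, t)%:R : R) * (((2 * t)`!)%:R / (2 ^ t * t`!)%:R)
        <= ('C(m, t)%:R : R) * (2 ^ t * t`!)%:R
    & ('C(m, t)%:R : R) * (2 ^ t * t`!)%:R
        <= ((k * n)%:R : R) ^+ t * expR (- ((t * (t - 1))%:R / (k * n)%:R))].
Proof.
move=> _ even_kn kHs tm N m.
have kn2m : (k * n = 2 * m)%N by rewrite /m (mulnC 2) divnK // dvdn2.
have cHs : #|Hstar| = m.
  by apply/eqP; rewrite -(eqn_pmul2l (isT : 0 < 2)%N) (card_kfactor kHs) kn2m.
have -> : ((2 * t)`!)%:R / (2 ^ t * t`!)%:R = (oddfact t)%:R :> R.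
  by rewrite oddfact_fact natrM mulfK // pnatr_eq0 -lt0n muln_gt0 expn_gt0 fact_gt0.
split.
- by rewrite -natrM ler_nat -cHs card_kfactors_symdiff_le.
- by rewrite ler_wpM2l // ler_nat oddfact_le.
- by rewrite -natrM mulnCA bin_ffact kn2m expn2_ffact_le_expR.
Qed.
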